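(* For every $n\in\mathbb{N}$ there exists an oriented ordered graph $\overrightarrow{G}$ on $2n$ vertices in which every vertex has degree $1$, which contains no oriented ordered subgraph $\overrightarrow{M}_2$ and no oriented ordered subgraph $\overrightarrow{P}_3$, and which satisfies $\overrightarrow{\chi}(\overrightarrow{G})=n+1$.
   Context: An ordered graph is a finite simple undirected graph with a linear order on its vertices. An oriented ordered graph $\overrightarrow{G}$ is an ordered graph in which each edge is given exactly one direction. An ordered homomorphism between oriented ordered graphs is a vertex map $f$ with $f(u)\le f(v)$ whenever $u\le v$ and such that $(f(u),f(v))$ is an arc of the target whenever $(u,v)$ is an arc; the target is itself an oriented ordered graph (so it has no pair of opposite arcs). The oriented ordered colouring $\overrightarrow{\chi}(\overrightarrow{G})$ is the minimum number of vertices of an oriented ordered graph $H$ admitting an ordered homomorphism $\overrightarrow{G}\to H$. $\overrightarrow{M}_2$ denotes the ordered matching $M_2$ (vertices $a_1<b_1<a_2<b_2$, edges $\{a_1,b_1\},\{a_2,b_2\}$) with any orientation of its edges, and $\overrightarrow{P}_3$ denotes the ordered path $P_3$ (vertices $v_1<v_2<v_3$, edges $\{v_1,v_2\},\{v_2,v_3\}$) with any orientation of its edges; containing one as a subgraph means there is an injective order-preserving vertex map sending arcs to arcs. *)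

From mathcomp Require Import all_boot.
Set Implicit Arguments. Unset Strict Implicit. Unset Printing Implicit Defensive.

(* An oriented ordered graph on N vertices: vertex set 'I_N with the natural
   linear order; arcs form an irreflexive relation with no pair of opposite
   arcs (so the underlying undirected graph is simple and each edge gets
   exactly one direction). *)
Record ograph (N : nat) := OGraph {
  arc :> rel 'I_N;
  arc_irr : irreflexive arc;
  arc_asym : forall u v, arc u v -> ~~ arc v u }.

Definition edge N (G : ograph N) (u v : 'I_N) : bool := G u v || G v u.

Definition degree N (G : ograph N) (u : 'I_N) : nat := #|[set v | edge G u v]|.

Definition ord_hom N K (G : ograph N) (H : ograph K) (f : 'I_N -> 'I_K) : Prop :=
  (forall u v : 'I_N, (u <= v)%N -> (f u <= f v)%N) /\
  (forall u v : 'I_N, G u v -> H (f u) (f v)).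

Definition contains N M (G : ograph N) (H : ograph M) : Prop :=
  exists f : 'I_M -> 'I_N, injective f /\
    (forall u v : 'I_M, (u <= v)%N -> (f u <= f v)%N) /\
    (forall u v : 'I_M, H u v -> G (f u) (f v)).

Definition M2_edge (u v : 'I_4) : bool :=
  [|| ((u : nat) == 0) && ((v : nat) == 1), ((u : nat) == 1) && ((v : nat) == 0),
      ((u : nat) == 2) && ((v : nat) == 3) | ((u : nat) == 3) && ((v : nat) == 2)].

Definition P3_edge (u v : 'I_3) : bool :=
  [|| ((u : nat) == 0) && ((v : nat) == 1), ((u : nat) == 1) && ((v : nat) == 0),
      ((u : nat) == 1) && ((v : nat) == 2) | ((u : nat) == 2) && ((v : nat) == 1)].

Definition is_oM2 (H : ograph 4) : Prop := forall u v, edge H u v = M2_edge u v.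
Definition is_oP3 (H : ograph 3) : Prop := forall u v, edge H u v = P3_edge u v.

Definition no_M2 N (G : ograph N) : Prop :=
  forall H : ograph 4, is_oM2 H -> ~ contains G H.
Definition no_P3 N (G : ograph N) : Prop :=
  forall H : ograph 3, is_oP3 H -> ~ contains G H.

(* oriented ordered chromatic number of G equals k: the minimum number of
   vertices of an oriented ordered target admitting an ordered homomorphism.
   (Any finite linearly ordered target is isomorphic to some 'I_K.) *)
Definition ochi_eq N (G : ograph N) (k : nat) : Prop :=
  (exists (H : ograph k) (f : 'I_N -> 'I_k), ord_hom G H f) /\
  (forall K (H : ograph K) (f : 'I_N -> 'I_K), ord_hom G H f -> (k <= K)%N).

(** The graph is the nested perfect matching [{u, 2n-1-u}] whose edges are
    oriented alternately left-to-right and right-to-left.  Every edge crosses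
    the middle, so no two edges lie side by side (no [M2]), and degrees are
    one (no [P3]).  Collapsing the right half to a single vertex gives a
    homomorphism onto a star with [n+1] vertices.  Conversely, two consecutive
    nested edges carry opposite orientations, so an ordered homomorphism
    cannot merge both their left and their right endpoints: the image of the
    [k]-th innermost edge spans at least [k] steps, and the outermost one
    needs [n+1] vertices. *)

From mathcomp Require Import all_boot.
From mathcomp Require Import zify.

Set Implicit Arguments.
Unset Strict Implicit.
Unset Printing Implicit Defensive.

Lemma contains_edge N M (G : ograph N) (H : ograph M) (f : 'I_M -> 'I_N) :
  (forall u v, H u v -> G (f u) (f v)) ->
  forall u v, edge H u v -> edge G (f u) (f v).
Proof. by move=> fG u v /orP[/fG|/fG]; rewrite /edge => ->; rewrite ?orbT. Qed.

Lemma inj_homo_ord_ltn N M (f : 'I_M -> 'I_N) :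
  injective f -> (forall u v : 'I_M, (u <= v)%N -> (f u <= f v)%N) ->
  forall u v : 'I_M, (u < v)%N -> (f u < f v)%N.
Proof.
move=> f_inj f_mono u v lt_uv; rewrite ltn_neqAle f_mono ?andbT; last exact: ltnW.
by apply: contraTneq lt_uv => /val_inj/f_inj ->; rewrite ltnn.
Qed.

Lemma unique_neighbour_no_P3 N (G : ograph N) :
  (forall u v w, edge G u v -> edge G u w -> v = w) -> no_P3 G.
Proof.
move=> uniqG H H_P3 [f [f_inj [_ fG]]].
have edgeH (a b : nat) : P3_edge (inord a) (inord b) -> edge G (f (inord a)) (f (inord b)).
  by rewrite -H_P3; apply: contains_edge.
have /f_inj/eqP : f (inord 0) = f (inord 2).
  by apply: (uniqG (f (inord 1))); apply: edgeH; rewrite /P3_edge !inordK.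
by rewrite -val_eqE /= !inordK.
Qed.

Section OrdHom.
Variables (N K : nat) (G : ograph N) (H : ograph K) (f : 'I_N -> 'I_K).
Hypothesis f_hom : ord_hom G H f.

Lemma ord_hom_edge_neq u v : edge G u v -> f u != f v.
Proof. by move=> /orP[|] /f_hom.2; apply: contraTneq => ->; rewrite arc_irr. Qed.

Lemma ord_hom_reversed_arcs a b a' b' :
  G a b -> G b' a' -> f a = f a' -> f b = f b' -> False.
Proof.
move=> /f_hom.2 Hab /f_hom.2 Hba fa fb.
by have := arc_asym Hab; rewrite fa fb Hba.
Qed.

End OrdHom.

Section ParityOrientation.
Variables (N : nat) (R : rel 'I_N).
Hypotheses (R_sym : symmetric R) (R_irr : irreflexive R).

(* The edge [{u, v}] points from its left endpoint to its right one exactly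
   when the left endpoint is odd. *)
Definition parity_arc : rel 'I_N :=
  fun u v => R u v && (odd (minn u v) == (u < v)%N).

Lemma parity_arc_irr : irreflexive parity_arc.
Proof. by move=> u; rewrite /parity_arc R_irr. Qed.

Lemma parity_arc_asym u v : parity_arc u v -> ~~ parity_arc v u.
Proof.
move=> /andP[Ruv /eqP odd_min]; rewrite /parity_arc minnC odd_min R_sym Ruv /=.
have neq_uv : u != v by apply: contraTneq Ruv => ->; rewrite R_irr.
by case: ltngtP neq_uv => // /ord_inj ->; rewrite eqxx.
Qed.

Definition parity_orient : ograph N := OGraph parity_arc_irr parity_arc_asym.

Lemma edge_parity_orient u v : edge parity_orient u v = R u v.
Proof.
rewrite /edge /= /parity_arc [R v u]R_sym [minn v u]minnC.
case: (boolP (R u v)) => //= Ruv.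
have neq_uv : u != v by apply: contraTneq Ruv => ->; rewrite R_irr.
by case: ltngtP neq_uv => [_|_|/ord_inj ->]; rewrite ?eqxx //; case: (odd _).
Qed.

End ParityOrientation.

Section NestedMatching.
Variable n : nat.
Local Notation N := (2 * n).

Lemma rev_ord_sym : symmetric (fun u v : 'I_N => v == rev_ord u).
Proof. by move=> u v; apply/eqP/eqP => ->; rewrite rev_ordK. Qed.

Lemma rev_ord_irr : irreflexive (fun u v : 'I_N => v == rev_ord u).
Proof. by move=> u; apply/eqP => /(congr1 val) /=; have := ltn_ord u; lia. Qed.

Definition nested_matching : ograph N := parity_orient rev_ord_sym rev_ord_irr.

Lemma edge_nested_matching u v : edge nested_matching u v = (v == rev_ord u).
Proof. exact: edge_parity_orient. Qed.

Lemma nested_matching_degree u : degree nested_matching u = 1%N.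
Proof.
rewrite /degree (_ : [set v | _] = [set rev_ord u]) ?cards1 //.
by apply/setP => v; rewrite !inE edge_nested_matching.
Qed.

Lemma nested_matching_no_P3 : no_P3 nested_matching.
Proof.
by apply: unique_neighbour_no_P3 => u v w; rewrite !edge_nested_matching => /eqP-> /eqP->.
Qed.

Lemma nested_matching_no_M2 : no_M2 nested_matching.
Proof.
move=> H H_M2 [f [f_inj [f_mono fG]]].
have rev_f (a b : nat) : M2_edge (inord a) (inord b) ->
    (f (inord a) + f (inord b))%N = N.-1.
  rewrite -H_M2 => /(contains_edge fG); rewrite edge_nested_matching => /eqP -> /=.
  by have := ltn_ord (f (inord a)); lia.
have f_lt (a b : nat) : (a < b < 4)%N -> (f (inord a) < f (inord b))%N.
  by move=> /andP[ab b4]; apply: inj_homo_ord_ltn => //; rewrite !inordK //; lia.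
have := rev_f 0 1; have := rev_f 2 3; rewrite /M2_edge !inordK //.
have := f_lt 0 1; have := f_lt 1 2; have := f_lt 2 3; lia.
Qed.

Lemma nested_matching_arc_rev (u : 'I_N) : (u < n)%N ->
  nested_matching u (rev_ord u) = odd u /\ nested_matching (rev_ord u) u = ~~ odd u.
Proof.
move=> lt_un; have lt_u_rev : (u < rev_ord u)%N by rewrite /=; lia.
rewrite /= /parity_arc rev_ordK !eqxx [minn (rev_ord u) u]minnC.
rewrite (minn_idPl (ltnW lt_u_rev)) lt_u_rev ltnNge (ltnW lt_u_rev).
by case: (odd _).
Qed.

Definition star_rel : rel 'I_n.+1 := fun a b => (a == ord_max) != (b == ord_max).

Lemma star_rel_sym : symmetric star_rel.
Proof. by move=> a b; rewrite /star_rel eq_sym. Qed.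

Lemma star_rel_irr : irreflexive star_rel.
Proof. by move=> a; rewrite /star_rel eqxx. Qed.

Definition star : ograph n.+1 := parity_orient star_rel_sym star_rel_irr.

Definition collapse (u : 'I_N) : 'I_n.+1 := inord (minn u n).

Lemma collapseE u : collapse u = minn u n :> nat.
Proof. by rewrite inordK // ltnS geq_minr. Qed.

Lemma collapse_ord_hom : ord_hom nested_matching star collapse.
Proof.
split=> [u v le_uv | u v]; first by rewrite !collapseE; lia.
move=> /andP[/eqP -> /eqP odd_min].
rewrite /= /parity_arc /star_rel -!val_eqE /= !collapseE.
have := ltn_ord u; move: odd_min => /=.
have -> : minn (minn u n) (minn (2 * n - u.+1) n) = minn u (2 * n - u.+1) by lia.
move=> -> lt_uN; lia.
Qed.

Section LowerBound.
Variables (K : nat) (H : ograph K) (f : 'I_N -> 'I_K).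
Hypothesis f_hom : ord_hom nested_matching H f.

Lemma ord_hom_span_step (u u' : 'I_N) : u' = u.+1 :> nat -> (u' < n)%N ->
  (f u + f (rev_ord u') < f u' + f (rev_ord u))%N.
Proof.
move=> u'E lt_u'n.
have le_left : (f u <= f u')%N by apply: f_hom.1; lia.
have le_right : (f (rev_ord u') <= f (rev_ord u))%N by apply: f_hom.1 => /=; lia.
suff : ~ ((f u : nat) = f u' /\ (f (rev_ord u') : nat) = f (rev_ord u)) by lia.
move=> [/ord_inj eq_left /ord_inj eq_right].
have [arc_u rarc_u] := nested_matching_arc_rev (u := u) ltac:(lia).
have [arc_u' rarc_u'] := nested_matching_arc_rev lt_u'n.
rewrite u'E in arc_u' rarc_u'.
case: (boolP (odd u)) => odd_u.
- apply: (ord_hom_reversed_arcs f_hom _ _ eq_left (esym eq_right)).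
  + by rewrite arc_u.
  + by rewrite rarc_u' /= odd_u.
- apply: (ord_hom_reversed_arcs f_hom _ _ (esym eq_right) eq_left).
  + by rewrite rarc_u.
  + by rewrite arc_u' /= odd_u.
Qed.

Lemma ord_hom_span k (u : 'I_N) : (u + k)%N = n.-1 -> (f u + k < f (rev_ord u))%N.
Proof.
elim: k u => [|k IHk] u uk.
  have le_u_rev : (f u <= f (rev_ord u))%N.
    by apply: f_hom.1 => /=; have := ltn_ord u; lia.
  have : f u != f (rev_ord u).
    by apply: (ord_hom_edge_neq f_hom); rewrite edge_nested_matching.
  by rewrite -val_eqE addn0 ltn_neqAle le_u_rev andbT.
have lt_u1N : (u.+1 < N)%N by lia.
have := IHk (Ordinal lt_u1N) ltac:(rewrite /=; lia).
have := ord_hom_span_step (u' := Ordinal lt_u1N) erefl ltac:(rewrite /=; lia).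
lia.
Qed.

Lemma ord_hom_nested_matching_size : (0 < n)%N -> (n.+1 <= K)%N.
Proof.
move=> n_gt0; have lt_0N : (0 < N)%N by lia.
have := ord_hom_span (u := Ordinal lt_0N) (k := n.-1) ltac:(rewrite /=; lia).
by have := ltn_ord (f (rev_ord (Ordinal lt_0N))); lia.
Qed.

End LowerBound.

End NestedMatching.

Theorem proposition3 (n : nat) (hn : (0 < n)%N) :
  exists G : ograph (2 * n),
    (forall u, degree G u = 1%N) /\ no_M2 G /\ no_P3 G /\ ochi_eq G n.+1.
Proof.
exists (nested_matching n); split; first exact: nested_matching_degree.
split; first exact: nested_matching_no_M2.
split; first exact: nested_matching_no_P3.
split; first by exists (star n), (@collapse n); exact: collapse_ord_hom.
by move=> K H f f_hom; exact: ord_hom_nested_matching_size f_hom hn.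
Qed.
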